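(* Let $m,n$ be positive integers with $m\ge n$. Then there exists a common knowledge distinguishing debate game $B=(A,S,P,C_w,C_l)$ such that $|C_w(s)|\ge m$ and $|C_l(s)|\le n$ for all $s\in S$, but $e^{\mathrm{CKDDG}}_B(M)\ge\frac{2n-m}{2m}$ for every policy $M$.
   Context: Let $\delta$ be a special default action. A CKDDG is a tuple $(A,S,P,C_w,C_l)$ with $A$ finite, $\delta\notin A$, $S$ finite, $P$ a probability mass function on $S$, and $C_w,C_l:S\to\mathcal P(A)$. A policy is $M:\{1,2\}\times(A\cup\{\delta\})^2\to[0,1]$ with $M(1,a_1,a_2)+M(2,a_1,a_2)=1$. For $j\in\{1,2\}$ and $s\in S$, $w^i_M((j,s))$ is the value to agent $i$ of the two-player zero-sum game with payoff matrix $M(i,\cdot,\cdot)$ in which agent $j$ chooses from $C_w(s)\cup\{\delta\}$ and the other agent chooses from $C_l(s)\cup\{\delta\}$. The error is $e^{\mathrm{CKDDG}}_B(M)=\mathbb E_{s\sim P}\left[\frac{w^1_M((2,s))+w^2_M((1,s))}{2}\right]$. *)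

From mathcomp Require Import all_boot all_order all_algebra.
From mathcomp Require Import boolp classical_sets reals.
Set Implicit Arguments. Unset Strict Implicit. Unset Printing Implicit Defensive.
Import Order.TTheory GRing.Theory Num.Theory.
Local Open Scope ring_scope.
Local Open Scope classical_set_scope.

Inductive agent := Ag1 | Ag2.
Definition other (i : agent) := match i with Ag1 => Ag2 | Ag2 => Ag1 end.

Section CKDDG.
Variables (R : realType) (A S : finType).

Definition act := option A.
Definition delta : act := None.

Definition with_delta (C : {set A}) : {set act} :=
  delta |: [set Some a | a in C].

Definition is_policy (M : agent -> act -> act -> R) : Prop :=
  forall a1 a2, 0 <= M Ag1 a1 a2 /\ 0 <= M Ag2 a1 a2 /\
                M Ag1 a1 a2 + M Ag2 a1 a2 = 1.

Definition mixed (D : {set act}) (x : act -> R) : Prop :=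
  (forall a, 0 <= x a) /\ (forall a, a \notin D -> x a = 0) /\
  \sum_(a in D) x a = 1.

Definition payoff (M : agent -> act -> act -> R) (i : agent)
  (x1 x2 : act -> R) : R :=
  \sum_(a1 : act) \sum_(a2 : act) x1 a1 * x2 a2 * M i a1 a2.

Definition game_value (M : agent -> act -> act -> R) (i : agent)
  (D1 D2 : {set act}) : R :=
  let Di := if i is Ag1 then D1 else D2 in
  let Do := if i is Ag1 then D2 else D1 in
  sup [set v | exists xi, mixed Di xi /\
       v = inf [set u | exists xo, mixed Do xo /\
                u = (if i is Ag1 then payoff M i xi xo
                                 else payoff M i xo xi)]].

(* w^i_M((j,s)): agent j chooses from C_w(s) ∪ {delta}, the other agent
   from C_l(s) ∪ {delta}. *)
Definition w (Cw Cl : S -> {set A}) (M : agent -> act -> act -> R)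
  (i j : agent) (s : S) : R :=
  let Dw := with_delta (Cw s) in
  let Dl := with_delta (Cl s) in
  if j is Ag1 then game_value M i Dw Dl else game_value M i Dl Dw.

Definition is_pmf (P : S -> R) : Prop :=
  (forall s, 0 <= P s) /\ \sum_(s : S) P s = 1.

Definition ckddg_error (P : S -> R) (Cw Cl : S -> {set A})
  (M : agent -> act -> act -> R) : R :=
  \sum_(s : S) P s * ((w Cw Cl M Ag1 Ag2 s + w Cw Cl M Ag2 Ag1 s) / 2).

End CKDDG.

From mathcomp Require Import all_boot all_order all_algebra.
From mathcomp Require Import classical_sets reals.
From mathcomp Require Import ring lra.
Set Implicit Arguments. Unset Strict Implicit. Unset Printing Implicit Defensive.
Import Order.TTheory GRing.Theory Num.Theory.
Local Open Scope ring_scope.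

(* Take S = A = Z/m with the uniform distribution, give the winning side every
   action and the losing side at state s the cyclic window {s, ..., s+n-1}.
   Given a policy M, let x and y be epsilon-optimal strategies of the two agents
   in the unrestricted zero-sum game M(1,.,.): by the minimax theorem (obtained
   from Ville's alternative, itself proved by Fourier-Motzkin elimination) their
   guarantees add up to 1 - 2 epsilon.  At state s the losing agent still plays
   its strategy after moving the mass outside its window onto delta, which
   costs at most that mass.  Every action lies in exactly n windows, so the
   mass lost by each agent averages at most (m - n)/m over s, and the error is
   at least 1/2 - (m - n)/m = (2n - m)/(2m). *)

Lemma ex_separating (R : realDomainType) (I : finType) (P Q : pred I) (f g : I -> R) :
  (forall i j, P i -> Q j -> f i <= g j) ->
  exists t, (forall i, P i -> f i <= t) /\ (forall j, Q j -> t <= g j).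
Proof.
move=> fg; case: (pickP P) => [i0 Pi0 | noP].
  case: (arg_maxP f Pi0) => i Pi f_max.
  by exists (f i); split => [i' /f_max | j /(fg _ _ Pi)].
case: (pickP Q) => [j0 Qj0 | noQ].
  case: (arg_minP g Qj0) => j Qj g_min.
  by exists (g j); split => [i | j' /g_min]; rewrite ?noP.
by exists 0; split => [i | j]; rewrite ?noP ?noQ.
Qed.

Section FourierMotzkin.
Variables (R : realFieldType) (T : finType).

(* A pair [(c, b)] encodes the linear inequality [\sum_k c k * z k <= b]. *)
Definition ineq := ((T -> R) * R)%type.

Definition ineq0 : ineq := (fun=> 0, 0).
Definition ineqD (r1 r2 : ineq) : ineq := (fun k => r1.1 k + r2.1 k, r1.2 + r2.2).
Definition ineqZ (a : R) (r : ineq) : ineq := (fun k => a * r.1 k, a * r.2).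

Inductive cone (I : Type) (S : I -> ineq) : ineq -> Prop :=
| cone0 : cone S ineq0
| cone_gen i : cone S (S i)
| coneD r1 r2 : cone S r1 -> cone S r2 -> cone S (ineqD r1 r2)
| coneZ a r : 0 <= a -> cone S r -> cone S (ineqZ a r).

Definition dot (V : {set T}) (c z : T -> R) := \sum_(k in V) c k * z k.

Lemma dotD V r1 r2 z : dot V (ineqD r1 r2).1 z = dot V r1.1 z + dot V r2.1 z.
Proof. by rewrite /dot -big_split; apply: eq_bigr => k _; rewrite mulrDl. Qed.

Lemma dotZ V a r z : dot V (ineqZ a r).1 z = a * dot V r.1 z.
Proof. by rewrite /dot mulr_sumr; apply: eq_bigr => k _; rewrite mulrA. Qed.

Lemma dotT c z : dot [set: T] c z = \sum_k c k * z k.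
Proof. by apply: eq_bigl => k; rewrite inE. Qed.

Section Elimination.
Variables (I : finType) (S : I -> ineq) (v : T).

Definition fm_elim (j : I + I * I) : ineq :=
  match j with
  | inl i => if (S i).1 v == 0 then S i else ineq0
  | inr (p, q) =>
      if (0 < (S p).1 v) && ((S q).1 v < 0)
      then ineqD (ineqZ (- (S q).1 v) (S p)) (ineqZ ((S p).1 v) (S q))
      else ineq0
  end.

Lemma cone_fm_elim r : cone fm_elim r -> cone S r /\ r.1 v = 0.
Proof.
elim=> [|j|r1 r2 _ [c1 e1] _ [c2 e2]|a r1 a_ge0 _ [c1 e1]].
- by split; [exact: cone0|].
- case: j => [i|[p q]] /=.
    by case: eqP => [e|_]; split => //; [exact: cone_gen|exact: cone0].
  case: ifP => [/andP [hp hq]|_]; last by split => //; exact: cone0.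
  split; last by rewrite /= mulNr mulrC addNr.
  by apply: coneD; apply: coneZ; rewrite ?oppr_ge0 ?ltW //; exact: cone_gen.
- by split; [exact: coneD|rewrite /= e1 e2 addr0].
- by split; [exact: coneZ|rewrite /= e1 mulr0].
Qed.

Lemma fm_elim_lift (V : {set T}) (z : T -> R) : v \in V ->
  (forall j, dot (V :\ v) (fm_elim j).1 z <= (fm_elim j).2) ->
  exists z', forall i, dot V (S i).1 z' <= (S i).2.
Proof.
move=> vV z_sol.
pose c i := (S i).1 v; pose d i := dot (V :\ v) (S i).1 z; pose b i := (S i).2.
have zero_ok i : c i = 0 -> d i <= b i.
  by move=> ci0; have := z_sol (inl i); rewrite /= -/(c i) ci0 eqxx.
have pair_ok q p : c q < 0 -> 0 < c p -> (b q - d q) / c q <= (b p - d p) / c p.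
  move=> cq_lt0 cp_gt0; have := z_sol (inr (p, q)).
  rewrite /= -/(c p) -/(c q) cp_gt0 cq_lt0 dotD !dotZ /= => comb.
  rewrite -/(d p) -/(d q) -/(b p) -/(b q) in comb.
  rewrite ler_pdivlMr // mulrAC ler_ndivrMr //; nra.
have [t [t_lo t_hi]] := ex_separating pair_ok.
exists (fun k => if k == v then t else z k) => i.
have -> : dot V (S i).1 (fun k => if k == v then t else z k) = c i * t + d i.
  rewrite /dot (big_setD1 v vV) /= eqxx; congr (_ + _).
  by apply: eq_bigr => k; rewrite in_setD1 => /andP [/negbTE -> _].
rewrite -lerBrDr; case: (ltrgtP (c i) 0) => ci.
- by have := t_lo _ ci; rewrite ler_ndivrMr // mulrC.
- by have := t_hi _ ci; rewrite ler_pdivlMr // mulrC.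
- by rewrite ci mul0r subr_ge0; apply: zero_ok.
Qed.

End Elimination.

Lemma ineq_alternative (I : finType) (S : I -> ineq) (V : {set T}) :
  (exists z, forall i, dot V (S i).1 z <= (S i).2) \/
  (exists2 r, cone S r & {in V, forall k, r.1 k = 0} /\ r.2 < 0).
Proof.
move: {2}#|V| (erefl #|V|) => n; elim: n I S V => [|n IH] I S V cardV.
  move/cards0_eq: cardV => ->.
  case: (pickP (fun i => (S i).2 < 0)) => [i bi_lt0 | b_ge0].
    by right; exists (S i); [exact: cone_gen | split => // k; rewrite inE].
  by left; exists (fun=> 0) => i; rewrite /dot big_set0 leNgt b_ge0.
have [v vV] : exists v, v \in V by apply/card_gt0P; rewrite cardV.
have cardV' : #|V :\ v| = n by move: cardV; rewrite (cardsD1 v) vV add1n => -[].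
case: (IH _ (fm_elim S v) _ cardV') => [[z z_sol] | [r cone_r [r_V r_lt0]]].
  by left; apply: fm_elim_lift vV z_sol.
have [cone_r' r_v] := cone_fm_elim cone_r.
right; exists r => //; split => // k kV.
by case: (eqVneq k v) => [-> // | kv]; apply: r_V; rewrite in_setD1 kv.
Qed.

End FourierMotzkin.

Section Distributions.
Variables (R : numDomainType) (U : finType).

Definition is_distr (x : U -> R) := (forall a, 0 <= x a) /\ \sum_a x a = 1.

Definition point_mass (a0 a : U) : R := (a == a0)%:R.

Lemma sum_point_mass a0 (f : U -> R) : \sum_a point_mass a0 a * f a = f a0.
Proof.
rewrite (bigD1 a0) //= /point_mass eqxx mul1r big1 ?addr0 // => a /negbTE ->.
by rewrite mul0r.
Qed.

Lemma point_mass_distr a0 : is_distr (point_mass a0).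
Proof.
split=> [a|]; first exact: ler0n.
by have := sum_point_mass a0 (fun=> 1); under eq_bigr do rewrite mulr1.
Qed.

Lemma distr_avg_ge (x f : U -> R) c : is_distr x -> (forall a, c <= f a) ->
  c <= \sum_a x a * f a.
Proof.
move=> [x_ge0 x_sum] c_le; rewrite -[c]mul1r -x_sum mulr_suml.
by apply: ler_sum => a _; apply: ler_wpM2l.
Qed.

Lemma distr_avg_le (x f : U -> R) c : is_distr x -> (forall a, f a <= c) ->
  \sum_a x a * f a <= c.
Proof.
move=> [x_ge0 x_sum] le_c; rewrite -[c]mul1r -x_sum mulr_suml.
by apply: ler_sum => a _; apply: ler_wpM2l.
Qed.

End Distributions.

Arguments point_mass {R U}.

Lemma sum_option (R : nmodType) (A : finType) (f : option A -> R) :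
  \sum_a f a = f None + \sum_a f (Some a).
Proof.
rewrite (bigD1 None) //=; congr (_ + _).
rewrite (reindex_omap Some id) => [|[a|] //].
by apply: eq_bigl => a; rewrite eqxx.
Qed.

Section Ville.
Variables (R : realFieldType) (U1 U2 : finType) (M : U1 -> U2 -> R) (t : R).

(* The system [x >= 0], [\sum_a x a = 1] and [t <= \sum_a x a * M a b] for
   every column [b], in the variables [x a]. *)
Definition ville_system (j : U1 + (bool + U2)) : ineq R U1 :=
  match j with
  | inl a => (fun k => - point_mass a k, 0)
  | inr (inl true) => (fun=> 1, 1)
  | inr (inl false) => (fun=> -1, -1)
  | inr (inr b) => (fun a => t - M a b, 0)
  end.

Lemma cone_ville_system r : cone ville_system r ->
  exists2 y, (forall b, 0 <= y b) &
    forall a, r.1 a <= r.2 + \sum_b y b * (t - M a b).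
Proof.
have sum0 (f : U2 -> R) : \sum_b 0 * f b = 0 by rewrite big1 // => b; rewrite mul0r.
elim=> [|j|r1 r2 _ [y1 y1_ge0 r1_le] _ [y2 y2_ge0 r2_le]
        |a r1 a_ge0 _ [y y_ge0 r_le]].
- by exists (fun=> 0) => // a; rewrite sum0 addr0.
- case: j => [a|[[]|b]].
  + by exists (fun=> 0) => // k; rewrite sum0 addr0 /= oppr_le0 ler0n.
  + by exists (fun=> 0) => // k; rewrite sum0 addr0.
  + by exists (fun=> 0) => // k; rewrite sum0 addr0.
  + exists (point_mass b) => [k|a]; first exact: ler0n.
    by rewrite add0r sum_point_mass.
- exists (y1 \+ y2) => [b|a]; first by rewrite addr_ge0.
  under eq_bigr do rewrite mulrDl.
  by rewrite big_split /= addrACA; apply: lerD.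
- exists (fun b => a * y b) => [b|k]; first by rewrite mulr_ge0.
  under eq_bigr do rewrite -mulrA.
  by rewrite -mulr_sumr -mulrDr; apply: ler_wpM2l.
Qed.

Lemma ville_alternative (a0 : U1) :
  (exists2 x, is_distr x & forall b, t <= \sum_a x a * M a b) \/
  (exists2 y, is_distr y & forall a, \sum_b M a b * y b < t).
Proof.
case: (ineq_alternative ville_system [set: U1]) =>
  [[x x_sol] | [r cone_r [r0 r_lt0]]].
  have x_ge0 a : 0 <= x a.
    have := x_sol (inl a); rewrite dotT /=.
    by under eq_bigr do rewrite mulNr; rewrite sumrN sum_point_mass oppr_le0.
  have x_sum : \sum_a x a = 1.
    have := x_sol (inr (inl true)); have := x_sol (inr (inl false)).
    rewrite !dotT /= -!mulr_sumr mul1r mulN1r lerN2 => ge1 le1.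
    by apply/eqP; rewrite eq_le le1 ge1.
  left; exists x => // b; have := x_sol (inr (inr b)); rewrite dotT /=.
  under eq_bigr do rewrite mulrBl; rewrite sumrB -mulr_sumr x_sum mulr1 subr_le0.
  by under eq_bigr do rewrite mulrC.
right; have [y y_ge0 r_le] := cone_ville_system cone_r.
have pos a : 0 < \sum_b y b * (t - M a b).
  by have := r_le a; rewrite r0 ?inE //; lra.
pose Y := \sum_b y b.
have Y_gt0 : 0 < Y.
  rewrite lt_def sumr_ge0 // andbT; apply: contraTneq (pos a0) => /psumr_eq0P y0.
  by rewrite big1 ?ltxx // => b _; rewrite y0 ?mul0r.
exists (fun b => y b / Y) => [|a].
  split => [b|] /=; first by rewrite divr_ge0 ?y_ge0 ?ltW.
  by rewrite -mulr_suml mulfV ?gt_eqF.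
have := pos a; under eq_bigr do rewrite mulrBr.
rewrite sumrB -mulr_suml -/Y subr_gt0 => lt_t.
rewrite (eq_bigr (fun b => y b * M a b / Y)) => [|b _]; last first.
  by rewrite mulrA [M a b * _]mulrC.
by rewrite -mulr_suml ltr_pdivrMr // mulrC.
Qed.

End Ville.

Section Minimax.
Variables (R : realType) (U1 U2 : finType) (N : U1 -> U2 -> R).
Hypothesis N01 : forall a b, 0 <= N a b <= 1.

Lemma approx_minimax (a0 : U1) (b0 : U2) (e : R) : 0 < e ->
  exists x y V, [/\ is_distr x, is_distr y,
    forall b, V - e <= \sum_a x a * N a b &
    forall a, \sum_b y b * N a b <= V + e].
Proof.
move=> e_gt0.
pose guaranteed :=
  [set t : R | exists2 x, is_distr x & forall b, t <= \sum_a x a * N a b]%classic.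
have guaranteed_sup : has_sup guaranteed.
  split.
    exists 0, (point_mass a0); first exact: point_mass_distr.
    by move=> b; rewrite sum_point_mass; case/andP: (N01 a0 b).
  exists 1 => t [x x_distr /(_ b0) /le_trans]; apply.
  by apply: distr_avg_le x_distr _ => a; case/andP: (N01 a b0).
set V := sup guaranteed.
have [t [x x_distr x_ge] V_lt] := sup_adherent e_gt0 guaranteed_sup.
case: (ville_alternative N (V + e) a0) => [[x' x'_distr x'_ge] | [y y_distr y_lt]].
  have : V + e <= V by apply: sup_upper_bound => //; exists x'.
  by rewrite gerDl leNgt e_gt0.
exists x, y, V; split=> // [b | a]; first exact: le_trans (ltW V_lt) (x_ge b).
by apply: ltW; under eq_bigr do rewrite mulrC; apply: y_lt.
Qed.

End Minimax.

Lemma le_sup_inf (R : realType) (X : Type) (P : X -> Prop) (F : X -> set R)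
    (x : X) (c : R) :
  (forall x', P x' -> (F x' !=set0 /\ F x' `<=` [set u | 0 <= u <= 1])%classic) ->
  P x -> lbound (F x) c -> c <= sup [set v | exists x', P x' /\ v = inf (F x')]%classic.
Proof.
move=> F01 Px c_lb; have [F_ne F_sub] := F01 x Px.
apply: le_trans (lb_le_inf F_ne c_lb) _; apply: ub_le_sup; last by exists x.
exists 1 => _ [x' [Px' ->]]; have [[u Fu] F'_sub] := F01 x' Px'.
have /andP [_ u_le1] := F'_sub u Fu; apply: le_trans u_le1.
by apply: ge_inf Fu; exists 0 => u' /F'_sub /andP [].
Qed.

Section Games.
Variables (R : realType) (A : finType).
Implicit Types (M : agent -> act A -> act A -> R) (D L : {set act A}).
Implicit Types (x y : act A -> R).

Lemma policy_bounded M : is_policy M -> forall i a b, 0 <= M i a b <= 1.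
Proof.
by move=> M_policy [] a b; have [? [? ?]] := M_policy a b; apply/andP; split; lra.
Qed.

Lemma policy_Ag2 M : is_policy M -> forall a b, M Ag2 a b = 1 - M Ag1 a b.
Proof. by move=> M_policy a b; have [_ [_ ?]] := M_policy a b; lra. Qed.

Lemma mixed_distr D x : mixed D x -> is_distr x.
Proof.
move=> [x_ge0 [x_out x_sum]]; split => //; rewrite -x_sum [RHS]big_mkcond.
by apply: eq_bigr => a _; case: ifP => // /negbT /x_out.
Qed.

Lemma point_mass_mixed D : delta A \in D -> mixed D (point_mass (delta A) : _ -> R).
Proof.
move=> deltaD; split=> [a|]; first exact: ler0n.
split=> [a aD|]; first by rewrite /point_mass; case: eqP aD => // ->; rewrite deltaD.
rewrite (bigD1 (delta A)) //= /point_mass eqxx big1 ?addr0 // => a /andP [_].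
by move/negbTE ->.
Qed.

Lemma delta_in_with_delta (C : {set A}) : delta A \in with_delta C.
Proof. by rewrite !inE eqxx. Qed.

Lemma payoffE M i x y : payoff M i x y = \sum_b y b * \sum_a x a * M i a b.
Proof.
rewrite /payoff exchange_big; apply: eq_bigr => b _; rewrite mulr_sumr.
by apply: eq_bigr => a _; rewrite mulrA [y b * _]mulrC.
Qed.

Lemma payoffEr M i x y : payoff M i x y = \sum_a x a * \sum_b y b * M i a b.
Proof.
rewrite /payoff; apply: eq_bigr => a _; rewrite mulr_sumr.
by apply: eq_bigr => b _; rewrite !mulrA.
Qed.

Lemma payoff_bounded M i x y : (forall a b, 0 <= M i a b <= 1) ->
  is_distr x -> is_distr y -> 0 <= payoff M i x y <= 1.
Proof.
move=> M01 x_distr y_distr; rewrite payoffEr; apply/andP; split.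
  apply: distr_avg_ge x_distr _ => a; apply: distr_avg_ge y_distr _ => b.
  by case/andP: (M01 a b).
apply: distr_avg_le x_distr _ => a; apply: distr_avg_le y_distr _ => b.
by case/andP: (M01 a b).
Qed.

Lemma game_value_Ag1_ge M D1 D2 x c : (forall a b, 0 <= M Ag1 a b <= 1) ->
  delta A \in D2 -> mixed D1 x -> (forall y, mixed D2 y -> c <= payoff M Ag1 x y) ->
  c <= game_value M Ag1 D1 D2.
Proof.
move=> M01 deltaD2 x_mixed c_le.
apply: le_sup_inf x_mixed _ => [x' x'_mixed | _ [y [y_mixed ->]]]; last exact: c_le.
have x'_distr := mixed_distr x'_mixed; split.
  exists (payoff M Ag1 x' (point_mass (delta A))), (point_mass (delta A)).
  by split=> //; apply: point_mass_mixed.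
by move=> _ [y [/mixed_distr y_distr ->]]; apply: payoff_bounded.
Qed.

Lemma game_value_Ag2_ge M D1 D2 y c : (forall a b, 0 <= M Ag2 a b <= 1) ->
  delta A \in D1 -> mixed D2 y -> (forall x, mixed D1 x -> c <= payoff M Ag2 x y) ->
  c <= game_value M Ag2 D1 D2.
Proof.
move=> M01 deltaD1 y_mixed c_le.
apply: le_sup_inf y_mixed _ => [y' y'_mixed | _ [x [x_mixed ->]]]; last exact: c_le.
have y'_distr := mixed_distr y'_mixed; split.
  exists (payoff M Ag2 (point_mass (delta A)) y'), (point_mass (delta A)).
  by split=> //; apply: point_mass_mixed.
by move=> _ [x [/mixed_distr x_distr ->]]; apply: payoff_bounded.
Qed.

Definition mass_out L x := \sum_(a | a \notin L) x a.

Definition fold_delta L x a :=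
  (if a \in L then x a else 0) + mass_out L x * point_mass (delta A) a.

Lemma mass_out_with_delta (C : {set A}) x : is_distr x ->
  mass_out (with_delta C) x = 1 - x (delta A) - \sum_(a in C) x (Some a).
Proof.
move=> [_ x_sum]; rewrite -x_sum (bigID (mem (with_delta C))) /=.
rewrite big_setU1 /=; last by apply/imsetP => -[].
by rewrite big_imset /=; [rewrite /mass_out; ring | move=> a b _ _ []].
Qed.

Lemma fold_delta_mixed L x : delta A \in L -> is_distr x -> mixed L (fold_delta L x).
Proof.
move=> deltaL [x_ge0 x_sum]; have mass_ge0 : 0 <= mass_out L x by apply: sumr_ge0.
split=> [a|]; first by rewrite addr_ge0 ?mulr_ge0 ?ler0n //; case: ifP.
split=> [a aL|].
  rewrite /fold_delta /point_mass (negbTE aL).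
  by case: eqP aL => [->|_]; rewrite ?deltaL ?mulr0 ?addr0.
have [_ [_ pm_sum]] := point_mass_mixed deltaL.
rewrite big_split /= -mulr_sumr pm_sum mulr1 -x_sum [RHS](bigID (mem L)) /=.
by congr (_ + _); apply: eq_bigr => a ->.
Qed.

Lemma fold_delta_avg_ge L x f : is_distr x -> (forall a, 0 <= f a <= 1) ->
  \sum_a x a * f a - mass_out L x <= \sum_a fold_delta L x a * f a.
Proof.
move=> [x_ge0 _] f01.
have out_le : \sum_(a | a \notin L) x a * f a <= mass_out L x.
  by apply: ler_sum => a _; rewrite ler_piMr //; case/andP: (f01 a).
have -> : \sum_a fold_delta L x a * f a =
    \sum_(a in L) x a * f a + mass_out L x * f (delta A).
  rewrite /fold_delta; under eq_bigr do rewrite mulrDl -mulrA.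
  rewrite big_split /= -mulr_sumr sum_point_mass [in RHS]big_mkcond; congr (_ + _).
  by apply: eq_bigr => a _; case: ifP; rewrite ?mul0r.
rewrite (bigID (mem L)) /=; have /andP [f_ge0 _] := f01 (delta A).
have := mulr_ge0 (sumr_ge0 _ (fun a _ => x_ge0 a) : 0 <= mass_out L x) f_ge0; lra.
Qed.

End Games.

Section ErrorBound.
Variables (R : realType) (A S : finType) (Cw Cl : S -> {set A}).
Variable M : agent -> act A -> act A -> R.
Hypothesis M_policy : is_policy M.

Let M01 := policy_bounded M_policy.

Lemma w_sum_ge s x y V e : is_distr x -> is_distr y ->
  (forall b, V - e <= \sum_a x a * M Ag1 a b) ->
  (forall a, \sum_b y b * M Ag1 a b <= V + e) ->
  1 - 2 * e - (mass_out (with_delta (Cl s)) x + mass_out (with_delta (Cl s)) y)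
    <= w Cw Cl M Ag1 Ag2 s + w Cw Cl M Ag2 Ag1 s.
Proof.
move=> x_distr y_distr x_ge y_le; set L := with_delta (Cl s).
have w1 : V - e - mass_out L x <= w Cw Cl M Ag1 Ag2 s.
  apply: (game_value_Ag1_ge (x := fold_delta L x)) => //.
  - exact: delta_in_with_delta.
  - exact: fold_delta_mixed (delta_in_with_delta _) x_distr.
  move=> y' /mixed_distr y'_distr; rewrite payoffE; apply: distr_avg_ge y'_distr _ => b.
  by apply: le_trans (fold_delta_avg_ge L x_distr (M01 Ag1 ^~ b)); rewrite lerD2r.
have w2 : 1 - V - e - mass_out L y <= w Cw Cl M Ag2 Ag1 s.
  apply: (game_value_Ag2_ge (y := fold_delta L y)) => //.
  - exact: delta_in_with_delta.
  - exact: fold_delta_mixed (delta_in_with_delta _) y_distr.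
  move=> x' /mixed_distr x'_distr; rewrite payoffEr; apply: distr_avg_ge x'_distr _ => a.
  apply: le_trans (fold_delta_avg_ge L y_distr (M01 Ag2 a)); rewrite lerD2r.
  under eq_bigr do rewrite (policy_Ag2 M_policy) mulrBr mulr1.
  by rewrite sumrB y_distr.2; have := y_le a; lra.
lra.
Qed.

Lemma ckddg_error_ge (P : S -> R) e : is_pmf P -> 0 < e ->
  exists x y, [/\ is_distr x, is_distr y &
    (1 - 2 * e - \sum_s P s * (mass_out (with_delta (Cl s)) x +
                               mass_out (with_delta (Cl s)) y)) / 2
      <= ckddg_error P Cw Cl M].
Proof.
move=> [P_ge0 P_sum] e_gt0.
have [x [y [V [x_distr y_distr x_ge y_le]]]] :=
  approx_minimax (M01 Ag1) (delta A) (delta A) e_gt0.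
exists x, y; split => //.
set out := fun s => mass_out (with_delta (Cl s)) x + mass_out (with_delta (Cl s)) y.
have -> : (1 - 2 * e - \sum_s P s * out s) / 2 = \sum_s P s * ((1 - 2 * e - out s) / 2).
  under [RHS]eq_bigr do rewrite mulrA mulrBr.
  by rewrite -mulr_suml sumrB -mulr_suml P_sum mul1r.
apply: ler_sum => s _; apply: ler_wpM2l => //.
by apply: ler_wpM2r; [rewrite invr_ge0 | apply: w_sum_ge].
Qed.

End ErrorBound.

Section Windows.
Variables (R : realType) (m n : nat).
Hypothesis n_le : (n <= m.+1)%N.

Definition window (s : 'I_m.+1) : {set 'I_m.+1} :=
  [set s + widen_ord n_le i | i : 'I_n].

Lemma window_inj s : injective (fun i => s + widen_ord n_le i).
Proof. by move=> i j /addrI /(congr1 val) /= /val_inj. Qed.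

Lemma card_window s : #|window s| = n.
Proof. by rewrite card_imset ?card_ord //; apply: window_inj. Qed.

Lemma sum_mass_out_window (z : act 'I_m.+1 -> R) : is_distr z ->
  \sum_s mass_out (with_delta (window s)) z <= m.+1%:R - n%:R.
Proof.
move=> z_distr; have [z_ge0 z_sum] := z_distr.
have some_sum : \sum_a z (Some a) = 1 - z (delta _).
  by rewrite -z_sum sum_option addrAC subrr add0r.
have in_sum s :
    \sum_(a in window s) z (Some a) = \sum_(i < n) z (Some (s + widen_ord n_le i)).
  rewrite big_imset /=; last by move=> i j _ _ /window_inj.
  by apply: eq_bigl => i; rewrite inE.
under eq_bigr do rewrite mass_out_with_delta // in_sum.
rewrite !sumrB !sumr_const card_ord exchange_big /=.
have shift j : \sum_(i < m.+1) z (Some (i + widen_ord n_le j)) = 1 - z (delta _).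
  rewrite -some_sum.
  by rewrite (reindex_inj (F := fun a => z (Some a)) (addIr (widen_ord n_le j))).
rewrite (eq_bigr _ (fun j _ => shift j)) sumr_const card_ord.
rewrite -[z _ *+ _]mulr_natr -[(1 - _) *+ _]mulr_natr.
have mn_ge0 : (0 : R) <= m.+1%:R - n%:R by rewrite subr_ge0 ler_nat.
have := mulr_ge0 (z_ge0 (delta _)) mn_ge0; lra.
Qed.

End Windows.

Lemma uniform_pmf (R : realType) (S : finType) :
  (0 < #|S|)%N -> is_pmf (fun _ : S => #|S|%:R^-1 : R).
Proof.
move=> S_gt0; split=> [s|]; first by rewrite invr_ge0 ler0n.
by rewrite sumr_const -[_ *+ _]mulr_natr mulVf // pnatr_eq0 -lt0n.
Qed.

Theorem theoremE1 (R : realType) (m n : nat) (hn : (0 < n)%N) (hm : (0 < m)%N)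
  (hmn : (n <= m)%N) :
  exists (A S : finType) (P : S -> R) (Cw Cl : S -> {set A}),
    is_pmf P /\
    (forall s : S, (m <= #|Cw s|)%N /\ (#|Cl s| <= n)%N) /\
    (forall M : agent -> act A -> act A -> R, is_policy M ->
       (2 * n%:R - m%:R) / (2 * m%:R) <= ckddg_error P Cw Cl M).
Proof.
case: m hm hmn => [//|m] _ hmn.
have P_pmf : is_pmf (fun _ : 'I_m.+1 => #|'I_m.+1|%:R^-1 : R).
  by apply: uniform_pmf; rewrite card_ord.
exists 'I_m.+1, 'I_m.+1, (fun=> #|'I_m.+1|%:R^-1), (fun=> [set: 'I_m.+1]),
  (window hmn).
split=> //; split=> [s|M M_policy]; first by rewrite cardsT card_ord card_window.
apply/ler_addgt0Pr => e e_gt0.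
have [x [y [x_distr y_distr err_ge]]] :=
  ckddg_error_ge (fun=> [set: 'I_m.+1]) (window hmn) M_policy P_pmf e_gt0.
rewrite card_ord in err_ge *; rewrite -mulr_sumr big_split /= in err_ge.
have im_ge0 : 0 <= m.+1%:R^-1 :> R by rewrite invr_ge0 ler0n.
have /(ler_wpM2l im_ge0) Sx_le := sum_mass_out_window hmn x_distr.
have /(ler_wpM2l im_ge0) Sy_le := sum_mass_out_window hmn y_distr.
rewrite mulrBr mulVf ?pnatr_eq0 // in Sx_le Sy_le.
have -> : (2 * n%:R - m.+1%:R) / (2 * m.+1%:R) = m.+1%:R^-1 * n%:R - 2^-1 :> R.
  by field; rewrite nat1r pnatr_eq0.
(* [lra] only succeeds once the inverse is abstracted into an opaque atom. *)
by move: err_ge Sx_le Sy_le; move: (m.+1%:R^-1 : R) => im; lra.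
Qed.
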